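(* Let $G=(V,E)$ be a connected regular graph and let $p_k(x,y)$ be the $k$-step transition probabilities of simple random walk on $G$. For every $n\ge1$, the kernel $g_n(x,y)=\sum_{2^n-2\le k<2^{n+1}-2}p_k(x,y)$ is symmetric and positive semi-definite (i.e. $\sum_{x,y}f(x)g_n(x,y)f(y)\ge0$ for every finitely supported $f:V\to\mathbb{R}$). Moreover $g_n(x,y)\ge0$, $g_n(x,y)=0$ whenever $d(x,y)>2^{n+1}-2$, and, if $G$ is transient, $\sum_{n\ge1}g_n(x,y)=g(x,y)$, the Green function.
   Context: $p_0(x,y)=1_{x=y}$. $d(x,y)$ is the graph distance. The Green function is $g(x,y)=\sum_{k\ge0}p_k(x,y)$. *)

From HB Require Import structures.
From mathcomp Require Import all_boot all_order all_algebra.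
From mathcomp Require Import all_classical all_reals all_analysis.
Set Implicit Arguments. Unset Strict Implicit. Unset Printing Implicit Defensive.
Import Order.TTheory GRing.Theory Num.Theory numFieldNormedType.Exports.
Local Open Scope ring_scope.

(* A locally finite graph on vertex type V is given by neighbour lists N x. *)
Definition simple_graph (V : eqType) (N : V -> seq V) : Prop :=
  (forall x, uniq (N x)) /\ (forall x, x \notin N x) /\
  (forall x y, (y \in N x) = (x \in N y)).

Definition graph_regular (V : eqType) (N : V -> seq V) : Prop :=
  exists d : nat, forall x, size (N x) = d.

Definition graph_adj (V : eqType) (N : V -> seq V) : rel V := fun a b => b \in N a.

Definition graph_connected (V : eqType) (N : V -> seq V) : Prop :=
  forall x y : V, exists s : seq V, path (graph_adj N) x s /\ last x s = y.

Definition graph_dist (V : eqType) (N : V -> seq V) (x y : V) (k : nat) : Prop :=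
  (exists s : seq V, [/\ path (graph_adj N) x s, last x s = y & size s = k]) /\
  (forall s : seq V, path (graph_adj N) x s -> last x s = y -> (k <= size s)%N).

Fixpoint srw_p (R : realType) (V : eqType) (N : V -> seq V) (k : nat) (x y : V)
  : R :=
  match k with
  | 0%N => if x == y then 1 else 0
  | k'.+1 => \sum_(z <- N x) (size (N x))%:R^-1 * srw_p R N k' z y
  end.

Definition g_block (R : realType) (V : eqType) (N : V -> seq V) (n : nat) (x y : V)
  : R := \sum_((2 ^ n - 2)%N <= k < (2 ^ n.+1 - 2)%N) srw_p R N k x y.

Definition srw_transient (R : realType) (V : eqType) (N : V -> seq V) : Prop :=
  exists x : V, cvgn (series (fun k => srw_p R N k x x)).

Definition green_fn (R : realType) (V : eqType) (N : V -> seq V) (x y : V) : R :=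
  limn (series (fun k => srw_p R N k x y)).

From HB Require Import structures.
From mathcomp Require Import all_boot all_order all_algebra.
From mathcomp Require Import all_classical all_reals all_analysis.
From mathcomp Require Import ring zify.
Import Order.TTheory GRing.Theory Num.Theory numFieldNormedType.Exports.
Local Open Scope classical_set_scope.
Local Open Scope ring_scope.

(* Let P be the averaging operator (P h)(x) = mean of h over the neighbours of
   x, so that p_k is the kernel of P^k. On a d-regular graph P is self-adjoint
   for the counting inner product and I + P is positive semi-definite, since
   d(<h,h> + <h,Ph>) is, up to a factor 1/2, a sum of squares (h x + h z)^2
   over edges. The block [2^n - 2, 2^(n+1) - 2) starts at an even index and has
   even length, so it splits into pairs k = 2j, 2j+1 with
   <f, P^(2j) f> + <f, P^(2j+1) f> = <P^j f, (I + P) P^j f> >= 0.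
   Nonnegativity and the support bound come from the path expansion of p_k.
   If the Green series converges at x0, then p_k(x,y) <= C p_(k+a+b)(x0,x0)
   for paths of lengths a, b from x0 to x and from y to x0, so every Green
   series converges, and the partial sums of the blocks are a subsequence of
   its partial sums. *)

Lemma sum_neq0_has {M : nmodType} {T : eqType} (s : seq T) (F : T -> M) :
  \sum_(z <- s) F z != 0 -> has (fun z => F z != 0) s.
Proof.
apply: contraNT; rewrite -all_predC => /allP F0; apply/eqP.
by rewrite big1_seq // => z /andP[_ /F0 /negPn /eqP].
Qed.

Lemma is_cvg_series_shiftn {K : numFieldType} {W : normedModType K} (u : W ^nat) m :
  cvgn (series u) -> cvgn (series (fun k => u (k + m)%N)).
Proof.
move=> u_cvg.
have -> : series (fun k => u (k + m)%N) = [sequence series u (n + m)%N - series u m]_n.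
  apply/funext => n /=; rewrite series_addn addrC addKr.
  by rewrite seriesEnat /= (big_addn 0 (n + m)) addnK.
apply: is_cvgB; last exact: is_cvg_cst.
by case/cvg_ex: u_cvg => l ul; apply/cvg_ex; exists l; rewrite cvg_shiftn.
Qed.

Section WalkKernel.
Context {R : realType} {V : eqType} (N : V -> seq V).
Local Notation p := (srw_p R N).

Lemma srw_p_ge0 k x y : 0 <= p k x y.
Proof.
elim: k x => [|k IH] x /=; first by case: ifP.
by apply: sumr_ge0 => z _; rewrite mulr_ge0 ?invr_ge0.
Qed.

Lemma srw_p_mul_le a b x z y : p a x z * p b z y <= p (a + b) x y.
Proof.
elim: a x => [|a IH] x /=.
  by case: eqP => [->|_]; rewrite ?mul1r // mul0r srw_p_ge0.
rewrite big_distrl /=; apply: ler_sum => w _.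
by rewrite -mulrA ler_wpM2l ?invr_ge0.
Qed.

Lemma path_srw_p_gt0 x s : path (graph_adj N) x s -> 0 < p (size s) x (last x s).
Proof.
elim: s x => [|z s IH] x /=; first by rewrite eqxx.
case/andP => zx /IH p_gt0; rewrite (big_rem z zx) /= ltr_pwDl //.
  rewrite mulr_gt0 // invr_gt0 ltr0n lt0n size_eq0.
  by apply: contraTneq zx; rewrite /graph_adj => ->.
by apply: sumr_ge0 => w _; rewrite mulr_ge0 ?invr_ge0 ?srw_p_ge0.
Qed.

Lemma srw_p_neq0_path k x y : p k x y != 0 ->
  exists s, [/\ path (graph_adj N) x s, last x s = y & size s = k].
Proof.
elim: k x => [|k IH] x /=.
  by case: (eqVneq x y) => [<- _|_]; [exists [::] | rewrite eqxx].
move=> /sum_neq0_has /hasP[z zx]; rewrite mulf_eq0 negb_or => /andP[_ pzy].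
have [s [zs <- <-]] := IH z pzy.
by exists (z :: s); rewrite /= zs andbT.
Qed.

Lemma g_block_ge0 n x y : 0 <= g_block R N n x y.
Proof. by apply: sumr_ge0 => k _; apply: srw_p_ge0. Qed.

Lemma g_block_eq0_far n x y k : graph_dist N x y k ->
  (2 ^ n.+1 - 2 < k)%N -> g_block R N n x y = 0.
Proof.
move=> [_ dist_min] far; rewrite /g_block big1_seq // => j.
rewrite mem_index_iota => /andP[_ /andP[_ j_lt]].
apply/eqP; apply: contraTT far => /srw_p_neq0_path[s [xs ys sj]].
by rewrite -leqNgt (leq_trans (dist_min s xs ys)) // sj ltnW.
Qed.

Lemma srw_series_cvg : graph_connected N -> srw_transient R N ->
  forall x y, cvgn (series (fun k => p k x y)).
Proof.
move=> conn [x0 cvg0] x y.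
have [s1 [path1 last1]] := conn x0 x; have [s2 [path2 last2]] := conn y x0.
set a := size s1; set b := size s2.
have pa_gt0 : 0 < p a x0 x by rewrite -last1 path_srw_p_gt0.
have pb_gt0 : 0 < p b y x0 by rewrite -last2 path_srw_p_gt0.
set C := (p a x0 x * p b y x0)^-1.
apply: (@series_le_cvg _ _ (C *: (fun k => p (k + (a + b)) x0 x0))).
- by move=> k; apply: srw_p_ge0.
- by move=> k; rewrite /= mulr_ge0 ?invr_ge0 ?mulr_ge0 ?srw_p_ge0.
- move=> k /=; rewrite ler_pdivlMl ?mulr_gt0 // mulrAC.
  rewrite addnC addnAC; apply: le_trans (srw_p_mul_le (a + k) b x0 y x0).
  by rewrite ler_wpM2r ?srw_p_ge0 // srw_p_mul_le.
- exact/is_cvg_seriesZ/(is_cvg_series_shiftn (fun k => p k x0 x0)).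
Qed.

Lemma g_block_series x y M :
  series (fun n => g_block R N n.+1 x y) M = series (fun k => p k x y) (2 ^ M.+1 - 2)%N.
Proof.
rewrite !seriesEnat /=; elim: M => [|M IH]; first by rewrite !big_geq.
rewrite big_nat_recr //= IH /g_block -big_cat_nat //.
by rewrite leq_sub2r // leq_exp2l.
Qed.

Lemma g_block_series_cvg x y : cvgn (series (fun k => p k x y)) ->
  series (fun n => g_block R N n.+1 x y) @ \oo --> green_fn R N x y.
Proof.
move=> p_cvg; have -> : series (fun n => g_block R N n.+1 x y) =
    series (fun k => p k x y) \o (fun M => (2 ^ M.+1 - 2)%N).
  by apply/funext => M; rewrite /= g_block_series.
apply: cvg_comp p_cvg; apply/cvgnyPge => M; exists M => // m /= Mm.
rewrite (leq_trans Mm) // leq_subRL ?addn2 ?(leq_trans _ (ltn_expl m.+1 _)) //.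
Qed.

End WalkKernel.

Lemma sum_seq_restrict {M : nmodType} {T : eqType} (s U : seq T) (F : T -> M) :
  uniq s -> uniq U -> (forall z, F z != 0 -> z \in U) ->
  \sum_(z <- s) F z = \sum_(z <- U | z \in s) F z.
Proof.
move=> s_uniq U_uniq F_U.
transitivity (\sum_(z <- s | z \in U) F z).
  rewrite [RHS]big_mkcond; apply: eq_bigr => z _; case: ifP => // /negbT zNU.
  by apply/eqP; apply: contraNT zNU => /F_U.
rewrite -[LHS]big_filter -[RHS]big_filter.
apply: perm_big; apply: uniq_perm; rewrite ?filter_uniq // => z.
by rewrite !mem_filter andbC.
Qed.

Lemma big_nat_pairs {M : nmodType} (G : nat -> M) m n :
  \sum_(m.*2 <= k < n.*2) G k = \sum_(m <= j < n) (G j.*2 + G j.*2.+1).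
Proof.
elim: n => [|n IH]; first by rewrite !big_geq.
have [mn | nm] := leqP m n; last by rewrite !big_geq ?leq_double.
by rewrite doubleS !big_nat_recr ?leqW ?leq_double //= IH addrA.
Qed.

Section Averaging.
Context {R : realType} {V : eqType} (N : V -> seq V).
Local Notation p := (srw_p R N).

Definition srw_step (h : V -> R) (x : V) : R :=
  \sum_(z <- N x) (size (N x))%:R^-1 * h z.
Local Notation P := srw_step.

(* A finitely supported function is given together with a list U covering its
   support; [dotp U] sums over [undup U] and does not depend on the choice of U
   (dotp_subset). *)
Definition supported_on (U : seq V) (h : V -> R) : Prop :=
  forall x, h x != 0 -> x \in U.

Definition dotp (U : seq V) (g h : V -> R) : R := \sum_(x <- undup U) g x * h x.

Definition graph_nbhd (U : seq V) : seq V := U ++ flatten (map N U).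

Lemma srw_pE k x y : p k x y = iter k P (p 0 ^~ y) x.
Proof.
by elim: k x => // k IH x; rewrite /= /srw_step; apply: eq_bigr => z _; rewrite IH.
Qed.

Lemma dotpC U g h : dotp U g h = dotp U h g.
Proof. by apply: eq_bigr => x _; rewrite mulrC. Qed.

Lemma dotp_subset (U U' : seq V) g h : supported_on U g -> {subset U <= U'} ->
  dotp U g h = dotp U' g h.
Proof.
move=> g_U UU'; rewrite /dotp (sum_seq_restrict _ (undup U')) ?undup_uniq //.
- apply: big_rmcond_in => x _; rewrite mem_undup => xNU.
  suff -> : g x = 0 by rewrite mul0r.
  by apply/eqP; apply: contraNT xNU => /g_U.
- by move=> x; rewrite mulf_eq0 negb_or mem_undup => /andP[/g_U /UU'].
Qed.

Lemma dotp_delta U x h : supported_on U h -> dotp U (p 0 x) h = h x.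
Proof.
move=> h_U; rewrite /dotp /=; have [xU | xNU] := boolP (x \in U).
  rewrite (bigD1_seq x) ?mem_undup ?undup_uniq //= eqxx mul1r big1 ?addr0 // => y.
  by rewrite eq_sym => /negbTE ->; rewrite mul0r.
have -> : h x = 0 by apply/eqP; apply: contraNT xNU => /h_U.
rewrite big1_seq // => y /andP[_]; rewrite mem_undup.
by case: eqP => [<-|_ _]; [rewrite (negbTE xNU) | rewrite mul0r].
Qed.

Lemma iter_srw_stepE S f k x : supported_on S f ->
  iter k P f x = dotp S (p k x) f.
Proof.
move=> f_S; elim: k x => [|k IH] x; first by rewrite dotp_delta.
rewrite iterS /srw_step /dotp; under eq_bigr do rewrite IH /dotp big_distrr.
rewrite exchange_big /=; apply: eq_bigr => y _.
by rewrite big_distrl; apply: eq_bigr => z _; rewrite mulrA.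
Qed.

Lemma subset_iter_nbhd U i K : (i <= K)%N ->
  {subset iter i graph_nbhd U <= iter K graph_nbhd U}.
Proof.
move=> /subnK <-; rewrite iterD; elim: (K - i)%N => // j IH x /IH.
by rewrite /= /graph_nbhd mem_cat => ->.
Qed.

Hypothesis N_sym : forall x y, (y \in N x) = (x \in N y).

Lemma supported_on_iter U f i K : supported_on U f -> (i <= K)%N ->
  supported_on (iter K graph_nbhd U) (iter i P f).
Proof.
move=> f_U /subset_iter_nbhd iK x Pf_x; apply: iK; move: x Pf_x.
elim: i => [|i IH] x; first exact: f_U.
move=> /sum_neq0_has /hasP[z zx]; rewrite mulf_eq0 negb_or => /andP[_ fz].
rewrite /= /graph_nbhd mem_cat; apply/orP; right; apply/flatten_mapP.
by exists z; [exact: IH | rewrite -N_sym].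
Qed.

Hypothesis N_uniq : forall x, uniq (N x).

Lemma exchange_big_nbr (W : seq V) (F : V -> V -> R) :
  (forall x z, F x z != 0 -> (x \in W) && (z \in W)) ->
  \sum_(x <- undup W) \sum_(z <- N x) F x z = \sum_(z <- undup W) \sum_(x <- N z) F x z.
Proof.
move=> F_W; have restrict x (G : V -> R) : (forall z, G z != 0 -> z \in W) ->
    \sum_(z <- N x) G z = \sum_(z <- undup W) (if z \in N x then G z else 0).
  move=> G_W; rewrite -big_mkcond (sum_seq_restrict _ (undup W)) ?undup_uniq // => z.
  by rewrite mem_undup => /G_W.
under eq_bigr => x _ do rewrite (restrict x) => [|z /F_W /andP[]//].
rewrite exchange_big /=; apply: eq_bigr => z _.
rewrite (restrict z) => [|x /F_W /andP[]//]; apply: eq_bigr => x _.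
by rewrite N_sym.
Qed.

Context {d : nat} (N_size : forall x, size (N x) = d).

Lemma dotp_step_adj W g h : supported_on W g -> supported_on W h ->
  dotp W g (P h) = dotp W (P g) h.
Proof.
move=> g_W h_W; rewrite /dotp /srw_step.
under eq_bigr => x _ do rewrite N_size big_distrr /=.
under [RHS]eq_bigr => z _ do rewrite N_size big_distrl /=.
rewrite exchange_big_nbr => [|x z]; last first.
  by rewrite !mulf_eq0 !negb_or => /and3P[/g_W -> _ /h_W ->].
by apply: eq_bigr => z _; apply: eq_bigr => x _; rewrite mulrCA mulrA.
Qed.

Lemma sum_nbr_const x (c : R) : \sum_(z <- N x) c = d%:R * c.
Proof. by rewrite big_const_seq count_predT iter_addr_0 N_size mulr_natl. Qed.

Lemma dotp_step_ge0 W h : supported_on W h -> 0 <= dotp W h h + dotp W h (P h).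
Proof.
move=> h_W; have [d0 | d_gt0] := posnP d.
  suff -> : dotp W h (P h) = 0.
    by rewrite addr0; apply: sumr_ge0 => x _; rewrite -expr2 sqr_ge0.
  apply: big1 => x _; rewrite /srw_step (size0nil (etrans (N_size x) d0)).
  by rewrite big_nil mulr0.
(* Summing h z ^ 2 over all edges (x, z) with x in W counts each vertex at most
   d times, by symmetry of the neighbour relation. *)
pose E := \sum_(x <- undup W) \sum_(z <- N x) h z ^+ 2.
have E_le : E <= d%:R * dotp W h h.
  have -> : E = \sum_(x <- undup W) \sum_(z <- N x) (if x \in W then h z ^+ 2 else 0).
    apply: eq_big_seq => x; rewrite mem_undup => xW.
    by apply: eq_bigr => z _; rewrite xW.
  rewrite exchange_big_nbr => [|x z]; last first.
    by case: ifP => _; rewrite ?eqxx // sqrf_eq0 => /h_W ->.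
  rewrite /dotp big_distrr /=; apply: ler_sum => z _.
  rewrite -expr2 -(sum_nbr_const z); apply: ler_sum => x _.
  by case: ifP; rewrite ?sqr_ge0.
have pair_le x : \sum_(z <- N x) (h x ^+ 2 - h z ^+ 2) <=
    (d%:R * 2) * (h x * h x + h x * P h x).
  have -> : P h x = d%:R^-1 * \sum_(z <- N x) h z by rewrite /srw_step N_size big_distrr.
  apply: (@le_trans _ _ (\sum_(z <- N x) 2 * (h x * h x + h x * h z))).
    apply: ler_sum => z _; rewrite -subr_ge0.
    have -> : 2 * (h x * h x + h x * h z) - (h x ^+ 2 - h z ^+ 2) = (h x + h z) ^+ 2.
      by ring.
    exact: sqr_ge0.
  rewrite -mulr_sumr big_split /= (sum_nbr_const x) -mulr_sumr le_eqVlt; apply/orP; left.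
  by apply/eqP; field; rewrite pnatr_eq0 -lt0n.
have dotp_sq : dotp W h h = \sum_(x <- undup W) h x ^+ 2.
  by apply: eq_bigr => x _; rewrite expr2.
have : 0 <= \sum_(x <- undup W) (d%:R * 2) * (h x * h x + h x * P h x).
  apply: (le_trans _ (ler_sum _ (fun x _ => pair_le x))).
  rewrite (eq_bigr (fun x => d%:R * h x ^+ 2 - \sum_(z <- N x) h z ^+ 2)) => [|x _].
    by rewrite sumrB -mulr_sumr subr_ge0 -dotp_sq.
  by rewrite sumrB (sum_nbr_const x).
by rewrite -mulr_sumr big_split pmulr_rge0 // mulr_gt0 // ltr0n.
Qed.

Lemma dotp_iter_adj W g h c :
  (forall i, (i <= c)%N -> supported_on W (iter i P g) /\ supported_on W (iter i P h)) ->
  dotp W g (iter c P h) = dotp W (iter c P g) h.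
Proof.
elim: c h => // c IH h supp.
rewrite [in LHS]iterSr IH => [|i ic]; last first.
  rewrite -iterSr; split; [by have [] := supp i (leqW ic) | by have [] := supp i.+1 ic].
rewrite dotp_step_adj //; first by have [] := supp c (leqnSn c).
by have [] := supp 0%N isT.
Qed.

Lemma dotp_pair_ge0 W f j :
  (forall i, (i <= j.*2.+1)%N -> supported_on W (iter i P f)) ->
  0 <= dotp W f (iter j.*2 P f) + dotp W f (iter j.*2.+1 P f).
Proof.
move=> supp.
have -> : iter j.*2 P f = iter j P (iter j P f) by rewrite -iterD addnn.
have -> : iter j.*2.+1 P f = iter j P (iter j.+1 P f) by rewrite -iterD addnS addnn.
rewrite (dotp_iter_adj W f (iter j P f)) => [|i ij]; last first.
  by rewrite -iterD; split; apply: supp; lia.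
rewrite (dotp_iter_adj W f (iter j.+1 P f)) => [|i ij]; last first.
  by rewrite -iterD; split; apply: supp; lia.
by apply: dotp_step_ge0; apply: supp; lia.
Qed.

Lemma quadratic_form_iter S f a b : supported_on S f ->
  \sum_(x <- undup S) \sum_(y <- undup S) f x * (\sum_(a <= k < b) p k x y) * f y =
  \sum_(a <= k < b) dotp S f (iter k P f).
Proof.
move=> f_S; rewrite [RHS]exchange_big /=; apply: eq_bigr => x _.
under eq_bigr do rewrite -mulrA; rewrite -!mulr_sumr; congr (_ * _).
under eq_bigr do rewrite mulr_suml; rewrite exchange_big /=.
by apply: eq_bigr => k _; rewrite (iter_srw_stepE _ _ _ _ f_S).
Qed.

Lemma g_block_psd n S f : (1 <= n)%N -> supported_on S f ->
  0 <= \sum_(x <- undup S) \sum_(y <- undup S) f x * g_block R N n x y * f y.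
Proof.
case: n => // n _ f_S; rewrite /g_block quadratic_form_iter //.
have dbl m : (2 ^ m.+1 - 2 = (2 ^ m - 1).*2)%N by rewrite -mul2n mulnBr expnS muln1.
rewrite !dbl big_nat_pairs big_seq; apply: sumr_ge0 => j.
rewrite mem_index_iota => /andP[_ j_lt].
set W := iter (2 ^ n.+1 - 1).*2 graph_nbhd S.
have S_W : {subset S <= W} := subset_iter_nbhd _ _ _ (leq0n _).
rewrite (dotp_subset _ _ _ (iter j.*2 P f) f_S S_W).
rewrite (dotp_subset _ _ _ (iter j.*2.+1 P f) f_S S_W).
apply: dotp_pair_ge0 => i ij; apply: supported_on_iter f_S _.
by rewrite (leq_trans ij) // (leq_trans (leqnSn _)) // -doubleS leq_double.
Qed.

Lemma srw_p_sym k x y : p k x y = p k y x.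
Proof.
set W := iter k graph_nbhd [:: x; y].
have p0C z : p 0 z = p 0 ^~ z by apply/funext => w /=; rewrite eq_sym.
have supp z i : z \in [:: x; y] -> (i <= k)%N -> supported_on W (iter i P (p 0 z)).
  move=> zxy ik; rewrite p0C; apply: supported_on_iter ik => w /=.
  by case: (eqVneq w z) => [-> _ | _]; rewrite ?eqxx.
rewrite !srw_pE -!p0C -(dotp_delta W x (iter k P (p 0 y))); last first.
  by apply: supp; rewrite ?inE ?eqxx ?orbT.
rewrite dotp_iter_adj => [|i ik]; last by split; apply: supp; rewrite ?inE ?eqxx ?orbT.
by rewrite dotpC dotp_delta //; apply: supp; rewrite ?inE ?eqxx.
Qed.

End Averaging.

Theorem mainTheorem6 (R : realType) (V : eqType) (N : V -> seq V)
  (Hs : simple_graph N) (Hreg : graph_regular N) (Hconn : graph_connected N) :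
  (forall n : nat, (1 <= n)%N ->
     (forall x y, g_block R N n x y = g_block R N n y x) /\
     (forall (f : V -> R) (S : seq V), (forall x, f x != 0 -> x \in S) ->
        0 <= \sum_(x <- undup S) \sum_(y <- undup S) f x * g_block R N n x y * f y) /\
     (forall x y, 0 <= g_block R N n x y) /\
     (forall x y k, graph_dist N x y k -> (2 ^ n.+1 - 2 < k)%N ->
        g_block R N n x y = 0)) /\
  (srw_transient R N -> forall x y : V,
     cvgn (series (fun k => srw_p R N k x y)) /\
     series (fun n => g_block R N n.+1 x y) @ \oo --> green_fn R N x y).
Proof.
have [N_uniq [_ N_sym]] := Hs; have [d N_size] := Hreg.
split=> [n n_ge1 | transient x y].
  split; [|split; [|split]].
  - by move=> x y; apply: eq_bigr => k _; exact: (srw_p_sym N N_sym N_uniq N_size).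
  - by move=> f S; exact: (g_block_psd N N_sym N_uniq N_size n S f n_ge1).
  - exact: g_block_ge0.
  - exact: g_block_eq0_far.
have p_cvg := srw_series_cvg N Hconn transient x y.
by split; last exact: g_block_series_cvg.
Qed.
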